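(* Let $R$ be the right shift on $\ell^2_{\mathbb{H}}(\mathbb{Z})$ defined by $R(x)=y$ with $y_i=x_{i+1}$ for $i\neq-1$ and $y_{-1}=0$. Then $\partial\sigma_S(R)$ is properly contained in $B_{S,\partial}(R)$.
   Context: $\mathbb{H}$ denotes the quaternions, $Re(q)$ the real part and $|q|$ the norm. $\ell^2_{\mathbb{H}}(\mathbb{Z})=\{x:\mathbb{Z}\to\mathbb{H}:\sum_i|x_i|^2<\infty\}$ is a right quaternionic Hilbert space with $xa=(x_ia)_i$ and $\langle x,y\rangle=\sum_i\overline{x_i}y_i$, equipped with the left multiplication induced by the standard Hilbert basis, i.e. $qx=(qx_i)_i$. $\mathcal{B}=\mathcal{B}(\ell^2_{\mathbb{H}}(\mathbb{Z}))$ (bounded right linear operators with $(qT)x=q(Tx)$, $(Tq)x=T(qx)$, composition, operator norm) is a quaternionic two-sided Banach algebra with unit $\mathbb{I}$, with invertible group $\mathcal{B}^{-1}$. For $T\in\mathcal{B}$, $R_q(T)=T^2-2Re(q)T+|q|^2\mathbb{I}$; $\sigma_S(T)=\{q\in\mathbb{H}:R_q(T)\notin\mathcal{B}^{-1}\}$ with boundary $\partial\sigma_S(T)$ in $\mathbb{H}$; the boundary S-spectrum is $B_{S,\partial}(T)=\{q\in\mathbb{H}:R_q(T)\in\partial(\mathcal{B}\setminus\mathcal{B}^{-1})\}$, where $\partial$ is the topological boundary in $\mathcal{B}$ for the operator norm. *)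

From Stdlib Require Import Reals ZArith.
From Coquelicot Require Import Coquelicot.
Open Scope R_scope.

Record quat := Quat { qre : R; qi : R; qj : R; qk : R }.

Definition qadd (p q : quat) : quat :=
  Quat (qre p + qre q) (qi p + qi q) (qj p + qj q) (qk p + qk q).
Definition qopp (p : quat) : quat := Quat (- qre p) (- qi p) (- qj p) (- qk p).
Definition qsub (p q : quat) : quat := qadd p (qopp q).
Definition qzero : quat := Quat 0 0 0 0.
Definition qreal (r : R) : quat := Quat r 0 0 0.
Definition qmul (p q : quat) : quat :=
  Quat (qre p * qre q - qi p * qi q - qj p * qj q - qk p * qk q)
       (qre p * qi q + qi p * qre q + qj p * qk q - qk p * qj q)
       (qre p * qj q - qi p * qk q + qj p * qre q + qk p * qi q)
       (qre p * qk q + qi p * qj q - qj p * qi q + qk p * qre q).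
Definition qnorm2 (q : quat) : R := qre q ^ 2 + qi q ^ 2 + qj q ^ 2 + qk q ^ 2.
Definition qnorm (q : quat) : R := sqrt (qnorm2 q).
Definition Req (q : quat) : R := qre q.

Definition hseq := Z -> quat.

(* symmetric partial sums  sum_{i=-n}^{n} |x_i|^2 *)
Definition psum2 (x : hseq) (n : nat) : R :=
  sum_f_R0 (fun k => qnorm2 (x (Z.of_nat k - Z.of_nat n)%Z)) (2 * n).

Definition in_l2 (x : hseq) : Prop := ex_finite_lim_seq (psum2 x).

(* ||x|| = (sum_i |x_i|^2)^(1/2) (meaningful for x in l^2) *)
Definition l2norm (x : hseq) : R := sqrt (real (Lim_seq (psum2 x))).

Definition rscal (x : hseq) (a : quat) : hseq := fun i => qmul (x i) a.
Definition lscal (q : quat) (x : hseq) : hseq := fun i => qmul q (x i).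
Definition sadd (x y : hseq) : hseq := fun i => qadd (x i) (y i).
Definition ssub (x y : hseq) : hseq := fun i => qsub (x i) (y i).

Definition operator := hseq -> hseq.

(* T in B(l^2_H(Z)): maps l^2 into l^2, right linear, bounded.
   Operators are only considered through their action on l^2. *)
Definition bounded_op (T : operator) : Prop :=
  (forall x, in_l2 x -> in_l2 (T x)) /\
  (forall x y a, in_l2 x -> in_l2 y ->
      T (sadd (rscal x a) y) = sadd (rscal (T x) a) (T y)) /\
  (exists C, 0 <= C /\ forall x, in_l2 x -> l2norm (T x) <= C * l2norm x).

Definition op_id : operator := fun x => x.
Definition op_comp (S T : operator) : operator := fun x => S (T x).
Definition op_sub (S T : operator) : operator := fun x => ssub (S x) (T x).
Definition op_add (S T : operator) : operator := fun x => sadd (S x) (T x).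
Definition op_lscal (q : quat) (T : operator) : operator := fun x => lscal q (T x).

Definition opdist_lt (S T : operator) (eps : R) : Prop :=
  exists c, c < eps /\
    forall x, in_l2 x -> l2norm (op_sub S T x) <= c * l2norm x.

Definition invertible (T : operator) : Prop :=
  exists S, bounded_op S /\
    forall x, in_l2 x -> S (T x) = x /\ T (S x) = x.

(* A lies in the topological boundary, in (B, operator norm), of B \ B^{-1}:
   A is in the closure of B \ B^{-1} and in the closure of its complement B^{-1}. *)
Definition in_boundary_noninv (A : operator) : Prop :=
  (forall eps, 0 < eps -> exists S, bounded_op S /\ ~ invertible S /\ opdist_lt S A eps) /\
  (forall eps, 0 < eps -> exists S, bounded_op S /\ invertible S /\ opdist_lt S A eps).

Definition Rq (q : quat) (T : operator) : operator :=
  op_add (op_sub (op_comp T T) (op_lscal (qreal (2 * Req q)) T))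
         (op_lscal (qreal (qnorm q ^ 2)) op_id).

Definition S_spectrum (T : operator) (q : quat) : Prop := ~ invertible (Rq q T).

Definition bd_S_spectrum (T : operator) (q : quat) : Prop :=
  forall eps, 0 < eps ->
    (exists p, qnorm (qsub p q) < eps /\ S_spectrum T p) /\
    (exists p, qnorm (qsub p q) < eps /\ ~ S_spectrum T p).

Definition B_S_bd (T : operator) (q : quat) : Prop := in_boundary_noninv (Rq q T).

Definition Rshift : operator :=
  fun x i => if Z.eq_dec i (-1)%Z then qzero else x (i + 1)%Z.

(* For any bounded T the map q |-> R_q(T) = T^2 - 2 Re(q) T + |q|^2 I is continuous into B,
   its coefficients being polynomial in q; so when q is a boundary point of sigma_S(T),
   R_q(T) is a norm limit both of non-invertible and of invertible operators R_p(T).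

   For the shift R the inclusion is strict at q = 0.  Every p with |p| < 1 lies in
   sigma_S(R), since the sequence (p^i)_{i >= 0} is in l^2 and is killed by R_p(R)
   (p is a root of X^2 - 2 Re(p) X + |p|^2); hence 0 is interior to sigma_S(R).  But
   R_0(R) = R^2 is the bilateral shift by two with zero weights at positions -2 and -1,
   and giving those two weights the value e instead yields an invertible weighted shift
   at distance |e| from R^2. *)

From Stdlib Require Import Reals ZArith Lia Lra Classical FunctionalExtensionality.
From Coquelicot Require Import Coquelicot.
Open Scope R_scope.

Ltac quat_eq :=
  repeat match goal with q : quat |- _ => destruct q end;
  unfold qsub, qopp, qadd, qmul, qzero, qreal, Req; simpl; f_equal; ring.

Lemma qnorm2_ge0 q : 0 <= qnorm2 q.
Proof. destruct q; unfold qnorm2; simpl; nra. Qed.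

Lemma qnorm_sq q : qnorm q ^ 2 = qnorm2 q.
Proof. apply pow2_sqrt, qnorm2_ge0. Qed.

Lemma qnorm2_zero : qnorm2 qzero = 0.
Proof. unfold qnorm2, qzero; simpl; ring. Qed.

Lemma qnorm2_mul p q : qnorm2 (qmul p q) = qnorm2 p * qnorm2 q.
Proof. destruct p, q; unfold qnorm2, qmul; simpl; ring. Qed.

Lemma qnorm2_qreal c : qnorm2 (qreal c) = c ^ 2.
Proof. unfold qnorm2, qreal; simpl; ring. Qed.

Lemma qnorm2_add_le p q : qnorm2 (qadd p q) <= 2 * qnorm2 p + 2 * qnorm2 q.
Proof.
destruct p as [a b c d], q as [a' b' c' d']; unfold qnorm2, qadd; simpl.
pose proof (pow2_ge_0 (a - a')); pose proof (pow2_ge_0 (b - b')).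
pose proof (pow2_ge_0 (c - c')); pose proof (pow2_ge_0 (d - d')); nra.
Qed.

Lemma qnorm2_sub_le p q : qnorm2 (qsub p q) <= 2 * qnorm2 p + 2 * qnorm2 q.
Proof.
replace (qnorm2 q) with (qnorm2 (qopp q)) by (destruct q; unfold qnorm2; simpl; ring).
apply qnorm2_add_le.
Qed.

Lemma cauchy_schwarz4 a0 a1 a2 a3 b0 b1 b2 b3 :
  (a0 * b0 + a1 * b1 + a2 * b2 + a3 * b3) ^ 2
  <= (a0 ^ 2 + a1 ^ 2 + a2 ^ 2 + a3 ^ 2) * (b0 ^ 2 + b1 ^ 2 + b2 ^ 2 + b3 ^ 2).
Proof.
pose proof (pow2_ge_0 (a0 * b1 - a1 * b0)); pose proof (pow2_ge_0 (a0 * b2 - a2 * b0)).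
pose proof (pow2_ge_0 (a0 * b3 - a3 * b0)); pose proof (pow2_ge_0 (a1 * b2 - a2 * b1)).
pose proof (pow2_ge_0 (a1 * b3 - a3 * b1)); pose proof (pow2_ge_0 (a2 * b3 - a3 * b2)).
nra.
Qed.

(* [|p|^2 - |q|^2 = <p - q, p + q>] *)
Lemma qnorm2_sub_sq_le p q :
  (qnorm2 p - qnorm2 q) ^ 2 <= qnorm2 (qsub p q) * qnorm2 (qadd p q).
Proof.
destruct p as [a b c d], q as [a' b' c' d']; unfold qnorm2, qsub, qadd, qopp; cbn [qre qi qj qk].
replace (a ^ 2 + b ^ 2 + c ^ 2 + d ^ 2 - (a' ^ 2 + b' ^ 2 + c' ^ 2 + d' ^ 2))
  with ((a + - a') * (a + a') + (b + - b') * (b + b') + (c + - c') * (c + c')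
        + (d + - d') * (d + d')) by ring.
apply cauchy_schwarz4.
Qed.

(* [psum2 x] is [psum (fun i => qnorm2 (x i))] up to conversion. *)
Definition psum (g : Z -> R) (n : nat) : R :=
  sum_f_R0 (fun k => g (Z.of_nat k - Z.of_nat n)%Z) (2 * n).

Lemma psum0 g : psum g 0 = g 0%Z.
Proof. reflexivity. Qed.

Lemma psumS g n : psum g (S n) = psum g n + g (- Z.of_nat (S n))%Z + g (Z.of_nat (S n)).
Proof.
unfold psum. replace (2 * S n)%nat with (S (S (2 * n))) by lia.
rewrite tech5, decomp_sum by lia. cbn [Init.Nat.pred].
rewrite (sum_eq _ (fun k => g (Z.of_nat k - Z.of_nat n)%Z)) by (intros; f_equal; lia).
replace (Z.of_nat 0 - Z.of_nat (S n))%Z with (- Z.of_nat (S n))%Z by lia.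
replace (Z.of_nat (S (S (2 * n))) - Z.of_nat (S n))%Z with (Z.of_nat (S n)) by lia.
ring.
Qed.

Lemma psum_le g h n : (forall i, g i <= h i) -> psum g n <= psum h n.
Proof. intros Hgh. apply sum_Rle; auto. Qed.

Lemma psum_ge0 g n : (forall i, 0 <= g i) -> 0 <= psum g n.
Proof. intros Hg. apply cond_pos_sum; auto. Qed.

Lemma psum_add g h n : psum (fun i => g i + h i) n = psum g n + psum h n.
Proof. apply sum_plus. Qed.

Lemma psum_scal c g n : psum (fun i => c * g i) n = c * psum g n.
Proof. unfold psum. rewrite scal_sum. apply sum_eq; intros; ring. Qed.

Lemma psum_le_S g n : (forall i, 0 <= g i) -> psum g n <= psum g (S n).
Proof.
intros Hg. rewrite psumS.
pose proof (Hg (- Z.of_nat (S n))%Z); pose proof (Hg (Z.of_nat (S n))); lra.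
Qed.

Lemma psum_opp g n : psum (fun i => g (- i)%Z) n = psum g n.
Proof.
induction n as [|n IH]; [reflexivity|].
rewrite !psumS, IH, Z.opp_involutive. ring.
Qed.

Lemma psum_succ_le g n : (forall i, 0 <= g i) -> psum (fun i => g (i + 1)%Z) n <= psum g (S n).
Proof.
intros Hg.
enough (E : psum g (S n)
  = psum (fun i => g (i + 1)%Z) n + g (- Z.of_nat n)%Z + g (- Z.of_nat (S n))%Z).
{ rewrite E. pose proof (Hg (- Z.of_nat n)%Z); pose proof (Hg (- Z.of_nat (S n))%Z); lra. }
induction n as [|n IH].
- rewrite psumS, !psum0. simpl. ring.
- rewrite (psumS g (S n)), (psumS (fun i => g (i + 1)%Z) n), IH.
  replace (Z.of_nat (S n) + 1)%Z with (Z.of_nat (S (S n))) by lia.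
  replace (- Z.of_nat (S n) + 1)%Z with (- Z.of_nat n)%Z by lia.
  ring.
Qed.

Lemma psum_shift_nat_le g k n : (forall i, 0 <= g i) ->
  psum (fun i => g (i + Z.of_nat k)%Z) n <= psum g (n + k).
Proof.
intros Hg. revert n. induction k as [|k IH]; intros n.
- rewrite Nat.add_0_r. apply Req_le, sum_eq. intros; f_equal; lia.
- replace (n + S k)%nat with (S n + k)%nat by lia.
  eapply Rle_trans; [|apply IH].
  eapply Rle_trans; [|apply (psum_succ_le (fun i => g (i + Z.of_nat k)%Z)); auto].
  apply Req_le, sum_eq. intros; f_equal; lia.
Qed.

Lemma psum_shift_le g s n : (forall i, 0 <= g i) ->
  psum (fun i => g (i + s)%Z) n <= psum g (n + Z.abs_nat s).
Proof.
intros Hg. destruct (Z_le_dec 0 s) as [Hs|Hs].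
- pose proof (psum_shift_nat_le g (Z.abs_nat s) n Hg) as H.
  now rewrite Zabs2Nat.id_abs, Z.abs_eq in H by lia.
- rewrite <- (psum_opp (fun i => g (i + s)%Z)), <- (psum_opp g (n + _)).
  eapply Rle_trans; [|apply (psum_shift_nat_le (fun i => g (- i)%Z)); auto].
  apply Req_le, sum_eq. intros; f_equal; lia.
Qed.

Definition l2_bounded (x : hseq) (B : R) : Prop :=
  forall n, psum (fun i => qnorm2 (x i)) n <= B.

Definition l2norm2 (x : hseq) : R := real (Lim_seq (psum2 x)).

Lemma psum2_le_S x n : psum2 x n <= psum2 x (S n).
Proof. exact (psum_le_S _ n (fun i => qnorm2_ge0 (x i))). Qed.

Lemma l2_bounded_in_l2 x B : l2_bounded x B -> in_l2 x /\ l2norm2 x <= B.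
Proof.
intros Hx. assert (Hl2 : in_l2 x) by exact (ex_finite_lim_seq_incr _ B (psum2_le_S x) Hx).
split; [exact Hl2|]. destruct Hl2 as [l Hl].
unfold l2norm2. rewrite (is_lim_seq_unique _ _ Hl).
exact (is_lim_seq_le _ _ l B Hx Hl (is_lim_seq_const B)).
Qed.

Lemma in_l2_bounded x : in_l2 x -> l2_bounded x (l2norm2 x).
Proof.
intros [l Hl] n. unfold l2norm2. rewrite (is_lim_seq_unique _ _ Hl).
exact (is_lim_seq_incr_compare _ _ Hl (psum2_le_S x) n).
Qed.

Lemma l2norm2_ge0 x : in_l2 x -> 0 <= l2norm2 x.
Proof.
intros Hx. eapply Rle_trans; [|exact (in_l2_bounded x Hx 0%nat)].
apply psum_ge0. intros; apply qnorm2_ge0.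
Qed.

Lemma l2_bounded_combine z u v a b B1 B2 : 0 <= a -> 0 <= b ->
  (forall i, qnorm2 (z i) <= a * qnorm2 (u i) + b * qnorm2 (v i)) ->
  l2_bounded u B1 -> l2_bounded v B2 -> l2_bounded z (a * B1 + b * B2).
Proof.
intros Ha Hb Hz Hu Hv n. eapply Rle_trans; [apply psum_le, Hz|].
rewrite psum_add, !psum_scal. specialize (Hu n). specialize (Hv n). nra.
Qed.

(* [sq_bounded T C]: the operator norm of [T] is at most [sqrt C], phrased through
   partial sums so that no limit has to be computed. *)
Definition sq_bounded (T : operator) (C : R) : Prop :=
  forall x B, l2_bounded x B -> l2_bounded (T x) (C * B).

Definition right_linear (T : operator) : Prop :=
  forall x y a, in_l2 x -> in_l2 y -> T (sadd (rscal x a) y) = sadd (rscal (T x) a) (T y).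

Lemma sq_bounded_l2norm T C x : 0 <= C -> sq_bounded T C -> in_l2 x ->
  in_l2 (T x) /\ l2norm (T x) <= sqrt C * l2norm x.
Proof.
intros HC HT Hx.
destruct (l2_bounded_in_l2 _ _ (HT _ _ (in_l2_bounded x Hx))) as [HTx Hle].
split; [exact HTx|]. unfold l2norm. rewrite <- sqrt_mult_alt by exact HC.
now apply sqrt_le_1_alt.
Qed.

Lemma bounded_op_sq_bounded T C : right_linear T -> 0 <= C -> sq_bounded T C -> bounded_op T.
Proof.
intros Hlin HC HT. split; [|split; [exact Hlin|]].
- intros x Hx. apply (sq_bounded_l2norm T C x HC HT Hx).
- exists (sqrt C). split; [apply sqrt_pos|].
  intros x Hx. apply (sq_bounded_l2norm T C x HC HT Hx).
Qed.

Lemma sq_bounded_bounded_op T : bounded_op T -> exists C, 0 <= C /\ sq_bounded T C.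
Proof.
intros [Hl2 [_ [C [HC HT]]]]. exists (C ^ 2). split; [apply pow2_ge_0|].
intros x B Hx. destruct (l2_bounded_in_l2 x B Hx) as [Hxl2 HxB].
intros n. eapply Rle_trans; [exact (in_l2_bounded _ (Hl2 x Hxl2) n)|].
pose proof (l2norm2_ge0 x Hxl2). pose proof (l2norm2_ge0 _ (Hl2 x Hxl2)).
specialize (HT x Hxl2). unfold l2norm in HT.
assert (Hsq : sqrt (l2norm2 (T x)) ^ 2 <= (C * sqrt (l2norm2 x)) ^ 2).
{ apply pow_incr. split; [apply sqrt_pos | exact HT]. }
rewrite Rpow_mult_distr, !pow2_sqrt in Hsq by assumption.
pose proof (pow2_ge_0 C). nra.
Qed.

Lemma opdist_lt_sq_bounded S T C eps : 0 <= C -> sqrt C < eps ->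
  sq_bounded (op_sub S T) C -> opdist_lt S T eps.
Proof.
intros HC Heps HST. exists (sqrt C). split; [exact Heps|].
intros x Hx. apply (sq_bounded_l2norm _ C x HC HST Hx).
Qed.

Lemma sq_bounded_id : sq_bounded op_id 1.
Proof. intros x B Hx. now rewrite Rmult_1_l. Qed.

Lemma sq_bounded_comp S T C D :
  sq_bounded S C -> sq_bounded T D -> sq_bounded (op_comp S T) (C * D).
Proof. intros HS HT x B Hx. rewrite Rmult_assoc. apply HS, HT, Hx. Qed.

Lemma sq_bounded_lscal q T C : sq_bounded T C -> sq_bounded (op_lscal q T) (qnorm2 q * C).
Proof.
intros HT x B Hx n. unfold op_lscal, lscal. rewrite Rmult_assoc.
replace (psum _ n) with (psum (fun i => qnorm2 q * qnorm2 (T x i)) n)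
  by (apply sum_eq; intros; symmetry; apply qnorm2_mul).
rewrite psum_scal.
apply Rmult_le_compat_l; [apply qnorm2_ge0 | apply HT, Hx].
Qed.

Lemma sq_bounded_add S T C D : sq_bounded S C -> sq_bounded T D ->
  sq_bounded (op_add S T) (2 * C + 2 * D).
Proof.
intros HS HT x B Hx. rewrite Rmult_plus_distr_r, !Rmult_assoc.
apply (l2_bounded_combine _ (S x) (T x)); try lra; auto.
intros i. apply qnorm2_add_le.
Qed.

Lemma sq_bounded_sub S T C D : sq_bounded S C -> sq_bounded T D ->
  sq_bounded (op_sub S T) (2 * C + 2 * D).
Proof.
intros HS HT x B Hx. rewrite Rmult_plus_distr_r, !Rmult_assoc.
apply (l2_bounded_combine _ (S x) (T x)); try lra; auto.
intros i. apply qnorm2_sub_le.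
Qed.

Lemma Rq_right_linear p T : bounded_op T -> right_linear (Rq p T).
Proof.
intros [Hl2 [Hlin _]] x y a Hx Hy. apply functional_extensionality; intro i.
unfold Rq, op_add, op_sub, op_comp, op_lscal, op_id, lscal, ssub.
rewrite (Hlin x y a Hx Hy), (Hlin (T x) (T y) a (Hl2 x Hx) (Hl2 y Hy)).
unfold sadd, rscal.
generalize (T (T x) i) (T (T y) i) (T x i) (T y i) (x i) (y i); intros; quat_eq.
Qed.

Lemma Rq_bounded p T : bounded_op T -> bounded_op (Rq p T).
Proof.
intros HT. destruct (sq_bounded_bounded_op T HT) as [C [HC HTC]].
pose proof (qnorm2_ge0 (qreal (2 * Req p))); pose proof (qnorm2_ge0 (qreal (qnorm p ^ 2))).
apply (bounded_op_sq_bounded _ (2 * (2 * (C * C) + 2 * (qnorm2 (qreal (2 * Req p)) * C))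
                                + 2 * (qnorm2 (qreal (qnorm p ^ 2)) * 1))).
- now apply Rq_right_linear.
- nra.
- apply sq_bounded_add; [apply sq_bounded_sub|]; apply sq_bounded_comp || apply sq_bounded_lscal;
    auto using sq_bounded_id.
Qed.

Lemma Rq_sub p q T : op_sub (Rq p T) (Rq q T) =
  op_add (op_lscal (qreal (2 * Req q - 2 * Req p)) T)
         (op_lscal (qreal (qnorm p ^ 2 - qnorm q ^ 2)) op_id).
Proof.
apply functional_extensionality; intro x. apply functional_extensionality; intro i.
unfold Rq, op_add, op_sub, op_comp, op_lscal, op_id, lscal, ssub, sadd.
generalize (T (T x) i) (T x i) (x i) (qnorm p) (qnorm q) (Req p) (Req q); intros; quat_eq.
Qed.

Lemma Rq_coeff_le p q C : 0 <= C -> qnorm2 (qsub p q) <= 1 ->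
  2 * ((2 * Req q - 2 * Req p) ^ 2 * C) + 2 * ((qnorm p ^ 2 - qnorm q ^ 2) ^ 2 * 1)
  <= qnorm2 (qsub p q) * (8 * C + 4 + 16 * qnorm2 q).
Proof.
intros HC Hh. rewrite !qnorm_sq.
assert (Hre : (Req q - Req p) ^ 2 <= qnorm2 (qsub p q)).
{ destruct p as [a b c d], q as [a' b' c' d']; unfold qnorm2, qsub, qadd, qopp, Req; simpl.
  pose proof (pow2_ge_0 (b - b')); pose proof (pow2_ge_0 (c - c'));
  pose proof (pow2_ge_0 (d - d')). nra. }
assert (Hsum : qnorm2 (qadd p q) <= 2 * qnorm2 (qsub p q) + 8 * qnorm2 q).
{ replace (qadd p q) with (qadd (qsub p q) (qmul (qreal 2) q)) by quat_eq.
  eapply Rle_trans; [apply qnorm2_add_le|]. rewrite qnorm2_mul, qnorm2_qreal. lra. }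
pose proof (qnorm2_sub_sq_le p q). pose proof (qnorm2_ge0 (qsub p q)). pose proof (qnorm2_ge0 q).
nra.
Qed.

Lemma Rq_continuous T q eps : bounded_op T -> 0 < eps ->
  exists d, 0 < d /\ forall p, qnorm (qsub p q) < d -> opdist_lt (Rq p T) (Rq q T) eps.
Proof.
intros HT Heps. destruct (sq_bounded_bounded_op T HT) as [C [HC HTC]].
set (K := 8 * C + 4 + 16 * qnorm2 q).
assert (HK : 0 < K) by (pose proof (qnorm2_ge0 q); unfold K; lra).
assert (Hm : 0 < Rmin 1 (eps ^ 2 / K))
  by (apply Rmin_glb_lt; [lra | apply Rdiv_lt_0_compat; nra]).
exists (sqrt (Rmin 1 (eps ^ 2 / K))). split; [now apply sqrt_lt_R0|].
intros p Hp. apply sqrt_lt_0_alt in Hp.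
assert (Hh1 : qnorm2 (qsub p q) <= 1) by (pose proof (Rmin_l 1 (eps ^ 2 / K)); lra).
assert (HhK : qnorm2 (qsub p q) * K < eps ^ 2).
{ apply Rlt_div_r; [lra|]. pose proof (Rmin_r 1 (eps ^ 2 / K)); lra. }
pose proof (Rq_coeff_le p q C HC Hh1).
pose proof (pow2_ge_0 (2 * Req q - 2 * Req p)); pose proof (pow2_ge_0 (qnorm p ^ 2 - qnorm q ^ 2)).
apply (opdist_lt_sq_bounded _ _
  (2 * ((2 * Req q - 2 * Req p) ^ 2 * C) + 2 * ((qnorm p ^ 2 - qnorm q ^ 2) ^ 2 * 1))).
- nra.
- rewrite <- (sqrt_pow2 eps) by lra. apply sqrt_lt_1_alt. unfold K in HhK. split; [nra | lra].
- rewrite Rq_sub, <- !qnorm2_qreal.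
  apply sq_bounded_add; apply sq_bounded_lscal; auto using sq_bounded_id.
Qed.

Lemma bd_S_spectrum_B_S_bd T q : bounded_op T -> bd_S_spectrum T q -> B_S_bd T q.
Proof.
intros HT Hq. split; intros eps Heps;
  destruct (Rq_continuous T q eps HT Heps) as [d [Hd Hcont]];
  destruct (Hq d Hd) as [[p1 [Hp1 Hspec]] [p2 [Hp2 Hnspec]]].
- exists (Rq p1 T). auto using Rq_bounded.
- exists (Rq p2 T). split; [auto using Rq_bounded|]. split; [exact (NNPP _ Hnspec) | auto].
Qed.

Definition wshift (w : Z -> R) (s : Z) : operator :=
  fun x i => qmul (qreal (w i)) (x (i + s)%Z).

Lemma wshift_right_linear w s : right_linear (wshift w s).
Proof.
intros x y a _ _. apply functional_extensionality; intro i. unfold wshift, sadd, rscal.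
generalize (w i) (x (i + s)%Z) (y (i + s)%Z); intros; quat_eq.
Qed.

Lemma wshift_sq_bounded w s M : (forall i, w i ^ 2 <= M) -> sq_bounded (wshift w s) M.
Proof.
intros Hw x B Hx n. unfold wshift.
assert (HM : 0 <= M) by (eapply Rle_trans; [apply pow2_ge_0 | apply (Hw 0%Z)]).
eapply Rle_trans.
{ apply (psum_le _ (fun i => M * qnorm2 (x (i + s)%Z))). intros i.
  rewrite qnorm2_mul, qnorm2_qreal. apply Rmult_le_compat_r; [apply qnorm2_ge0 | apply Hw]. }
rewrite psum_scal. apply Rmult_le_compat_l; [exact HM|].
eapply Rle_trans; [|apply Hx].
apply (psum_shift_le (fun i => qnorm2 (x i))). intros; apply qnorm2_ge0.
Qed.

Lemma wshift_bounded w s M : (forall i, w i ^ 2 <= M) -> bounded_op (wshift w s).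
Proof.
intros Hw. apply (bounded_op_sq_bounded _ M).
- apply wshift_right_linear.
- eapply Rle_trans; [apply pow2_ge_0 | apply (Hw 0%Z)].
- now apply wshift_sq_bounded.
Qed.

Lemma wshift_cancel w v s t x : (s + t = 0)%Z -> (forall i, w i * v (i + s)%Z = 1) ->
  wshift w s (wshift v t x) = x.
Proof.
intros Hst Hwv. apply functional_extensionality; intro i. unfold wshift.
replace (i + s + t)%Z with i by lia.
transitivity (qmul (qreal (w i * v (i + s)%Z)) (x i)).
- generalize (w i) (v (i + s)%Z) (x i); intros; quat_eq.
- rewrite Hwv. generalize (x i); intros; quat_eq.
Qed.

Lemma wshift_invertible w s M M' : (forall i, w i <> 0) ->
  (forall i, w i ^ 2 <= M) -> (forall i, (/ w i) ^ 2 <= M') -> invertible (wshift w s).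
Proof.
intros Hw0 Hw Hinv. exists (wshift (fun j => / w (j - s)%Z) (- s)). split.
{ apply (wshift_bounded _ _ M'). intros; apply Hinv. }
intros x _. split; apply wshift_cancel; try lia; intros i; cbv beta.
- replace (i + - s)%Z with (i - s)%Z by lia. now apply Rinv_l.
- replace (i + s - s)%Z with i by lia. now apply Rinv_r.
Qed.

Lemma wshift_sub w v s : op_sub (wshift w s) (wshift v s) = wshift (fun i => w i - v i) s.
Proof.
apply functional_extensionality; intro x. apply functional_extensionality; intro i.
unfold op_sub, ssub, wshift. generalize (w i) (v i) (x (i + s)%Z); intros; quat_eq.
Qed.

Lemma Rshift_wshift : Rshift = wshift (fun i => if Z.eq_dec i (-1) then 0 else 1) 1.
Proof.
apply functional_extensionality; intro x. apply functional_extensionality; intro i.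
unfold Rshift, wshift. generalize (x (i + 1)%Z); intros.
destruct (Z.eq_dec i (-1)); quat_eq.
Qed.

Lemma Rshift_bounded : bounded_op Rshift.
Proof.
rewrite Rshift_wshift. apply (wshift_bounded _ _ 1). intros i.
destruct (Z.eq_dec i (-1)); simpl; lra.
Qed.

Definition hole_weight (e : R) (i : Z) : R :=
  if (Z.eqb i (-2) || Z.eqb i (-1))%bool then e else 1.

Lemma Rshift_comp : op_comp Rshift Rshift = wshift (hole_weight 0) 2.
Proof.
apply functional_extensionality; intro x. apply functional_extensionality; intro i.
unfold op_comp, Rshift, wshift, hole_weight.
replace (i + 1 + 1)%Z with (i + 2)%Z by lia. generalize (x (i + 2)%Z); intros.
destruct (Z.eqb_spec i (-2)), (Z.eqb_spec i (-1)), (Z.eq_dec i (-1)), (Z.eq_dec (i + 1) (-1));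
  try lia; quat_eq.
Qed.

Lemma hole_weight_sq_le e i : hole_weight e i ^ 2 <= e ^ 2 + 1.
Proof. unfold hole_weight. destruct (_ || _)%bool; pose proof (pow2_ge_0 e); simpl; lra. Qed.

Lemma Rshift_comp_approx eps : 0 < eps ->
  exists S, bounded_op S /\ invertible S /\ opdist_lt S (op_comp Rshift Rshift) eps.
Proof.
intros Heps. set (e := eps / 2). assert (He : 0 < e) by (unfold e; lra).
exists (wshift (hole_weight e) 2). split; [|split].
- apply (wshift_bounded _ _ (e ^ 2 + 1)), hole_weight_sq_le.
- apply (wshift_invertible _ _ (e ^ 2 + 1) ((/ e) ^ 2 + 1)).
  + intros i. unfold hole_weight. destruct (_ || _)%bool; lra.
  + apply hole_weight_sq_le.
  + intros i. unfold hole_weight.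
    destruct (_ || _)%bool; pose proof (pow2_ge_0 (/ e)); simpl; lra.
- rewrite Rshift_comp. apply (opdist_lt_sq_bounded _ _ (e ^ 2)).
  + apply pow2_ge_0.
  + rewrite sqrt_pow2; unfold e; lra.
  + rewrite wshift_sub. apply wshift_sq_bounded. intros i. unfold hole_weight.
    destruct (_ || _)%bool; pose proof (pow2_ge_0 e); simpl; lra.
Qed.

Lemma Rq_zero T : Rq qzero T = op_comp T T.
Proof.
apply functional_extensionality; intro x. apply functional_extensionality; intro i.
unfold Rq, op_add, op_sub, op_comp, op_lscal, op_id, lscal, ssub, sadd.
replace (qnorm qzero) with 0 by (unfold qnorm; now rewrite qnorm2_zero, sqrt_0).
generalize (T (T x) i) (T x i) (x i); intros; quat_eq.
Qed.

Fixpoint qpow (p : quat) (n : nat) : quat :=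
  match n with O => qreal 1 | S m => qmul p (qpow p m) end.

Definition geom_seq (p : quat) : hseq :=
  fun i => if Z_lt_dec i 0 then qzero else qpow p (Z.to_nat i).

Lemma qnorm2_qpow p n : qnorm2 (qpow p n) = qnorm2 p ^ n.
Proof.
induction n as [|n IH]; simpl; [now rewrite qnorm2_qreal; ring|].
now rewrite qnorm2_mul, IH.
Qed.

Lemma psum2_geom_seq p n : psum2 (geom_seq p) n = sum_f_R0 (fun k => qnorm2 p ^ k) n.
Proof.
induction n as [|n IH].
- change (qnorm2 (qreal 1) = qnorm2 p ^ 0). rewrite qnorm2_qreal; ring.
- change (psum2 (geom_seq p) (S n)) with (psum (fun i => qnorm2 (geom_seq p i)) (S n)).
  rewrite psumS. change (psum _ n) with (psum2 (geom_seq p) n). rewrite IH, tech5.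
  unfold geom_seq.
  destruct (Z_lt_dec (- Z.of_nat (S n)) 0), (Z_lt_dec (Z.of_nat (S n)) 0); try lia.
  rewrite Nat2Z.id, qnorm2_zero, qnorm2_qpow. ring.
Qed.

Lemma geom_seq_in_l2 p : qnorm2 p < 1 -> in_l2 (geom_seq p).
Proof.
intros Hp. apply (l2_bounded_in_l2 _ (1 / (1 - qnorm2 p))). intros n.
change (psum _ n) with (psum2 (geom_seq p) n). rewrite psum2_geom_seq, tech3 by lra.
pose proof (pow_le _ (S n) (qnorm2_ge0 p)).
apply Rmult_le_compat_r; [left; apply Rinv_0_lt_compat|]; lra.
Qed.

Lemma quat_char_poly p w :
  qadd (qsub (qmul p (qmul p w)) (qmul (qreal (2 * Req p)) (qmul p w)))
       (qmul (qreal (qnorm2 p)) w) = qzero.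
Proof. unfold qnorm2. quat_eq. Qed.

Lemma Rq_Rshift_geom_seq p : Rq p Rshift (geom_seq p) = fun _ => qzero.
Proof.
apply functional_extensionality; intro i.
unfold Rq, op_add, op_sub, op_comp, op_lscal, op_id, lscal, ssub, sadd.
rewrite qnorm_sq. unfold Rshift, geom_seq.
destruct (Z.eq_dec i (-1)), (Z.eq_dec (i + 1) (-1)), (Z_lt_dec i 0),
  (Z_lt_dec (i + 1) 0), (Z_lt_dec (i + 1 + 1) 0); try lia;
  try (unfold qnorm2; quat_eq).
replace (Z.to_nat (i + 1 + 1)) with (S (S (Z.to_nat i))) by lia.
replace (Z.to_nat (i + 1)) with (S (Z.to_nat i)) by lia.
apply quat_char_poly.
Qed.

Lemma Rq_Rshift_zero_seq p : Rq p Rshift (fun _ => qzero) = fun _ => qzero.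
Proof.
apply functional_extensionality; intro i.
unfold Rq, op_add, op_sub, op_comp, op_lscal, op_id, lscal, ssub, sadd, Rshift.
destruct (Z.eq_dec i (-1)), (Z.eq_dec (i + 1) (-1)); quat_eq.
Qed.

Lemma l2_bounded_zero_seq : l2_bounded (fun _ => qzero) 0.
Proof.
intros n. rewrite qnorm2_zero. unfold psum. rewrite sum_cte. lra.
Qed.

Lemma not_invertible_of_not_injective T x y :
  in_l2 x -> in_l2 y -> x <> y -> T x = T y -> ~ invertible T.
Proof.
intros Hx Hy Hxy HT [S [_ HS]]. apply Hxy.
rewrite <- (proj1 (HS x Hx)), <- (proj1 (HS y Hy)), HT. reflexivity.
Qed.

Lemma S_spectrum_Rshift p : qnorm2 p < 1 -> S_spectrum Rshift p.
Proof.
intros Hp. apply (not_invertible_of_not_injective _ (geom_seq p) (fun _ => qzero)).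
- now apply geom_seq_in_l2.
- exact (proj1 (l2_bounded_in_l2 _ _ l2_bounded_zero_seq)).
- intros E. apply (f_equal (fun x => qre (x 0%Z))) in E. simpl in E. lra.
- now rewrite Rq_Rshift_geom_seq, Rq_Rshift_zero_seq.
Qed.

Lemma opdist_lt_refl T eps : 0 < eps -> opdist_lt T T eps.
Proof.
intros Heps. apply (opdist_lt_sq_bounded _ _ 0); [lra | now rewrite sqrt_0 |].
intros x B _. replace (op_sub T T x) with (fun _ : Z => qzero).
- rewrite Rmult_0_l. apply l2_bounded_zero_seq.
- apply functional_extensionality; intro i. unfold op_sub, ssub.
  generalize (T x i); intros; quat_eq.
Qed.

Lemma B_S_bd_Rshift_zero : B_S_bd Rshift qzero.
Proof.
unfold B_S_bd. split; intros eps Heps.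
- exists (Rq qzero Rshift). split; [apply Rq_bounded, Rshift_bounded|]. split.
  + apply S_spectrum_Rshift. rewrite qnorm2_zero. lra.
  + now apply opdist_lt_refl.
- rewrite Rq_zero. now apply Rshift_comp_approx.
Qed.

Lemma not_bd_S_spectrum_Rshift_zero : ~ bd_S_spectrum Rshift qzero.
Proof.
intros Hbd. destruct (Hbd 1 Rlt_0_1) as [_ [p [Hp Hnspec]]]. apply Hnspec, S_spectrum_Rshift.
replace p with (qsub p qzero) by (destruct p; quat_eq).
rewrite <- sqrt_1 in Hp. now apply sqrt_lt_0_alt in Hp.
Qed.

Theorem mainTheorem15 :
  (forall q : quat, bd_S_spectrum Rshift q -> B_S_bd Rshift q) /\
  (exists q : quat, B_S_bd Rshift q /\ ~ bd_S_spectrum Rshift q).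
Proof.
split.
- intros q. apply bd_S_spectrum_B_S_bd, Rshift_bounded.
- exists qzero. split; [exact B_S_bd_Rshift_zero | exact not_bd_S_spectrum_Rshift_zero].
Qed.
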